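(* Let $n\ge 1$, and let $b,\lambda\in\mathbb{C}$ with $|b|=1$ and $|\lambda|=1$. Define the $n\times n$ matrix $B=[b_{i,j}]_{1\le i,j\le n}$ by $b_{i,j}=0$ if $j<i$; $b_{i,j}=(-1)^{j+1}\binom{j-2}{i-2}\dfrac{b}{\lambda^{i+j-2}}$ if $j\ge i$ and $i>1$; $b_{1,1}=b$; and $b_{1,j}=0$ for $2\le j\le n$. Then $B\overline{B}=I$.
   Context: $\overline{B}$ denotes the entrywise complex conjugate of $B$. *)

From HB Require Import structures.
From mathcomp Require Import all_boot all_order all_algebra.
From mathcomp Require Import reals complex.
Set Implicit Arguments. Unset Strict Implicit. Unset Printing Implicit Defensive.
Import Order.TTheory GRing.Theory Num.Theory.
Local Open Scope ring_scope.

(* Entry b_{i,j} of the paper, with 1-based indices i j (as nats). *)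
Definition Bentry (C : numClosedFieldType) (b lam : C) (i j : nat) : C :=
  if (j < i)%N then 0
  else if (1 < i)%N then
    (-1) ^+ (j + 1) * ('C(j - 2, i - 2))%:R * (b / lam ^+ (i + j - 2))
  else if j == 1%N then b else 0.

(* The n x n matrix B; row/column k : 'I_n corresponds to paper index k+1. *)
Definition Bmat (C : numClosedFieldType) (n : nat) (b lam : C) : 'M[C]_n :=
  \matrix_(i < n, j < n) Bentry b lam i.+1 j.+1.

(* B is block diagonal: [b] followed by the block with entries
   [(-1)^(q+1) C(q,p) b / lam^(p+q+2)], 0 <= p, q < n-1.  As [conj b = 1/b] and
   [conj lam = 1/lam], the (p, r) entry of this block times its conjugate is
   [lam^r / lam^p * sum_q (-1)^(q+r) C(q,p) C(r,q)], and by binomial inversion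
   the sum is 1 if p = r and 0 otherwise. *)
From HB Require Import structures.
From mathcomp Require Import all_boot all_order all_algebra.
From mathcomp Require Import reals complex.
From mathcomp Require Import zify ring.
Set Implicit Arguments. Unset Strict Implicit. Unset Printing Implicit Defensive.
Import Order.TTheory GRing.Theory Num.Theory.
Local Open Scope ring_scope.

Lemma mul_bin_bin p q r : (p <= q)%N ->
  ('C(q, p) * 'C(r, q) = 'C(r, p) * 'C(r - p, q - p))%N.
Proof.
move=> le_pq; have [le_qr | lt_rq] := leqP q r; last first.
  rewrite (bin_small lt_rq) muln0; have [lt_rp | le_pr] := ltnP r p.
    by rewrite bin_small.
  by rewrite [X in (_ * X)%N]bin_small ?muln0 //; lia.
have le_pr : (p <= r)%N by apply: leq_trans le_qr.
have fact_gt0 : (0 < p`! * (q - p)`! * (r - q)`!)%N by rewrite !muln_gt0 !fact_gt0.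
apply/eqP; rewrite -(eqn_pmul2r fact_gt0); apply/eqP.
have le_qp_rp : (q - p <= r - p)%N by lia.
have fact_rp : ('C(r - p, q - p) * ((q - p)`! * (r - q)`!) = (r - p)`!)%N.
  by rewrite -(bin_fact le_qp_rp) (_ : r - p - (q - p) = r - q)%N //; lia.
transitivity r`!.
  by rewrite -(bin_fact le_qr) -(bin_fact le_pq); ring.
by rewrite -(bin_fact le_pr) -fact_rp; ring.
Qed.

Lemma sum_alternating_bin (R : pzRingType) M m : (m < M)%N ->
  \sum_(i < M) (-1) ^+ i *+ 'C(m, i) = (m == 0)%:R :> R.
Proof.
move=> lt_mM; rewrite -(subnKC lt_mM) big_split_ord /=.
rewrite [X in _ + X]big1 ?addr0 => [|i _]; last by rewrite bin_small ?mulr0n // ltn_addr.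
by rewrite -exprD1n addNr expr0n.
Qed.

Lemma binomial_inversion (R : pzRingType) N p r : (r < N)%N ->
  \sum_(q < N) (-1) ^+ (q + r) * ('C(q, p) * 'C(r, q))%:R = (p == r)%:R :> R.
Proof.
move=> lt_rN; have [lt_rp | le_pr] := ltnP r p.
  rewrite big1 => [|q _]; first by rewrite (gtn_eqF lt_rp).
  have [lt_qp | le_pq] := ltnP q p; first by rewrite bin_small ?mul0n ?mulr0.
  by rewrite [X in (_ * X)%N]bin_small ?muln0 ?mulr0 //; apply: leq_trans le_pq.
have le_pN : (p <= N)%N by apply: leq_trans (ltnW lt_rN).
rewrite -(subnKC le_pN) big_split_ord /= big1 ?add0r => [|q _]; last first.
  by rewrite bin_small ?mul0n ?mulr0.
have split_term t : (-1) ^+ (p + t + r) * ('C(p + t, p) * 'C(r, p + t))%:R =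
    (-1) ^+ (p + r) *+ 'C(r, p) * ((-1) ^+ t *+ 'C(r - p, t)) :> R.
  by rewrite mul_bin_bin ?leq_addr // addKn mulr_natr mulrnA addnAC exprD -mulrnAl -mulrnAr.
under eq_bigr do rewrite split_term.
rewrite -big_distrr sum_alternating_bin /=; last by lia.
have [<- | neq_pr] := eqVneq p r; last first.
  by rewrite subn_eq0 leqNgt ltn_neqAle neq_pr le_pr mulr0.
by rewrite subnn binn mulr1 addnn -mul2n exprM sqrrN !expr1n.
Qed.

Lemma conjC_norm1 (C : numClosedFieldType) (x : C) : `|x| = 1 -> x^* = x^-1.
Proof. by move=> x1; rewrite invC_norm x1 expr1n invr1 mul1r. Qed.

Section BEntries.

Variables (C : numClosedFieldType) (b lam : C).
Hypotheses (b1 : `|b| = 1) (lam1 : `|lam| = 1).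

Let b_neq0 : b != 0. Proof. by rewrite -normr_eq0 b1 oner_eq0. Qed.
Let lam_neq0 : lam != 0. Proof. by rewrite -normr_eq0 lam1 oner_eq0. Qed.

Lemma Bentry11 : Bentry b lam 1 1 = b. Proof. by []. Qed.
Lemma Bentry1S j : Bentry b lam 1 j.+2 = 0. Proof. by []. Qed.
Lemma BentryS1 i : Bentry b lam i.+2 1 = 0. Proof. by []. Qed.

Lemma BentrySS p q :
  Bentry b lam p.+2 q.+2 = (-1) ^+ (q + 1) * 'C(q, p)%:R * (b / lam ^+ (p + q + 2)).
Proof.
rewrite /Bentry !ltnS; case: ltnP => [lt_qp | _]; first by rewrite bin_small ?mulr0 ?mul0r.
rewrite (_ : p.+2 + q.+2 - 2 = p + q + 2)%N; last by lia.
by rewrite /= !subSS !subn0 !addSn !exprS !mulN1r opprK.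
Qed.

Lemma BentrySS_mul_conj p j r :
  Bentry b lam p.+2 j.+2 * (Bentry b lam j.+2 r.+2)^* =
  (-1) ^+ (j + r) * ('C(j, p) * 'C(r, j))%:R * (lam ^+ r / lam ^+ p).
Proof.
rewrite natrM !BentrySS !rmorphM rmorphXn rmorphN1 rmorph_nat fmorphV rmorphXn.
rewrite /= (conjC_norm1 b1) (conjC_norm1 lam1) exprVn invrK !exprD expr1.
by field; rewrite b_neq0 lam_neq0 !expf_neq0.
Qed.

Lemma sum_BentrySS_mul_conj N p r : (r < N)%N ->
  \sum_(j < N) Bentry b lam p.+2 j.+2 * (Bentry b lam j.+2 r.+2)^* = (p == r)%:R.
Proof.
move=> lt_rN; under eq_bigr do rewrite BentrySS_mul_conj.
rewrite -big_distrl binomial_inversion //=.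
have [-> | _] := eqVneq p r; last by rewrite mul0r.
by rewrite mul1r divff // expf_neq0.
Qed.

End BEntries.

Theorem lemma3p5 (R : realType) (n : nat) (b lam : R[i]) :
  (1 <= n)%N -> `|b| = 1 -> `|lam| = 1 ->
  Bmat n b lam *m map_mx Num.conj (Bmat n b lam) = 1%:M.
Proof.
move=> n_gt0 b1 lam1; apply/matrixP => i k; rewrite !mxE.
under eq_bigr do rewrite !mxE.
case: n n_gt0 i k => [//|n] _ [[|p] lt_pn] [[|r] lt_rn].
all: rewrite big_ord_recl; under eq_bigr do rewrite lift0; rewrite /=.
- by rewrite Bentry11 -normCK b1 expr1n big1 ?addr0 // => j _; rewrite Bentry1S mul0r.
- by rewrite Bentry11 Bentry1S rmorph0 mulr0 add0r big1 // => j _; rewrite Bentry1S mul0r.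
- by rewrite Bentry11 BentryS1 mul0r add0r big1 // => j _; rewrite BentryS1 rmorph0 mulr0.
- by rewrite BentryS1 mul0r add0r sum_BentrySS_mul_conj.
Qed.
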